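(* Let $\mathbb{K}$ be a field of characteristic $2$, let $(A,\cdot,\{-,-\},(-)^{\{2\}})$ be a weakly restricted Poisson algebra, and let $\mathcal{B}$ be a linear basis of $A$. Then $A$ is a restricted Poisson algebra if and only if $(xy)^{\{2\}}=x^2y^{\{2\}}+y^2x^{\{2\}}+xy\{x,y\}$ holds for every pair $x,y\in\mathcal{B}$.
   Context: $\mathbb{K}$ has characteristic $2$. A Poisson algebra is a commutative associative (not necessarily unital) $\mathbb{K}$-algebra $(A,\cdot)$ with a Lie bracket satisfying $\{ab,c\}=a\{b,c\}+b\{a,c\}$. It is weakly restricted if there is a map $(-)^{\{2\}}:A\to A$ making $(A,\{,\},(-)^{\{2\}})$ a restricted Lie algebra, i.e. $(\lambda x)^{\{2\}}=\lambda^2x^{\{2\}}$, $\mathrm{ad}_{x^{\{2\}}}=\mathrm{ad}_x^2$, $(x+y)^{\{2\}}=x^{\{2\}}+y^{\{2\}}+\{x,y\}$. It is restricted if moreover $(xy)^{\{2\}}=x^2y^{\{2\}}+y^2x^{\{2\}}+xy\{x,y\}$ for all $x,y\in A$. *)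

From HB Require Import structures.
From mathcomp Require Import all_boot all_order all_algebra.
Set Implicit Arguments. Unset Strict Implicit. Unset Printing Implicit Defensive.
Import GRing.Theory.
Local Open Scope ring_scope.

(* A : K-vector space (lmodType K); mul : the commutative associative product;
   br : the Poisson (Lie) bracket; sq : the restricted map x |-> x^{[2]}. *)

Section Defs.
Variables (K : fieldType) (A : lmodType K).

Definition bilinear_op (op : A -> A -> A) : Prop :=
  (forall (a : K) x y z, op (a *: x + y) z = a *: op x z + op y z) /\
  (forall (a : K) x y z, op x (a *: y + z) = a *: op x y + op x z).

Definition is_comm_assoc_algebra (mul : A -> A -> A) : Prop :=
  [/\ bilinear_op mul,
      (forall x y, mul x y = mul y x) &
      (forall x y z, mul x (mul y z) = mul (mul x y) z)].

Definition is_lie_bracket (br : A -> A -> A) : Prop :=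
  [/\ bilinear_op br,
      (forall x, br x x = 0) &
      (forall x y z, br x (br y z) + br y (br z x) + br z (br x y) = 0)].

Definition is_poisson (mul br : A -> A -> A) : Prop :=
  [/\ is_comm_assoc_algebra mul, is_lie_bracket br &
      (forall a b c, br (mul a b) c = mul a (br b c) + mul b (br a c))].

(* Restricted Lie algebra in characteristic 2. *)
Definition is_restricted_lie (br : A -> A -> A) (sq : A -> A) : Prop :=
  [/\ (forall (l : K) x, sq (l *: x) = (l ^+ 2) *: sq x),
      (forall x z, br (sq x) z = br x (br x z)) &
      (forall x y, sq (x + y) = sq x + sq y + br x y)].

Definition weakly_restricted_poisson (mul br : A -> A -> A) (sq : A -> A) : Prop :=
  is_poisson mul br /\ is_restricted_lie br sq.

Definition restricted_identity (mul br : A -> A -> A) (sq : A -> A) (x y : A) : Prop :=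
  sq (mul x y) = mul (mul x x) (sq y) + mul (mul y y) (sq x) + mul (mul x y) (br x y).

Definition restricted_poisson (mul br : A -> A -> A) (sq : A -> A) : Prop :=
  weakly_restricted_poisson mul br sq /\
  (forall x y, restricted_identity mul br sq x y).

Definition is_linear_basis (B : A -> Prop) : Prop :=
  (forall x : A, exists (s : seq A) (c : A -> K),
      (forall a, a \in s -> B a) /\ x = \sum_(a <- s) c a *: a) /\
  (forall (s : seq A) (c : A -> K), uniq s -> (forall a, a \in s -> B a) ->
      \sum_(a <- s) c a *: a = 0 -> forall a, a \in s -> c a = 0).

End Defs.

(* In characteristic 2 the defect
     D(x, y) = (xy)^{[2]} - x^2 y^{[2]} - y^2 x^{[2]} - xy {x, y}
   is symmetric, additive in each argument and satisfies D(l x, y) = l^2 D(x, y):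
   additivity follows from the Leibniz rule, which gives
     {xy, x'y} = xy {x', y} + x'y {x, y} + y^2 {x, x'},
   together with (x + x')^2 = x^2 + x'^2.  Hence D vanishes on all of A as soon
   as it vanishes on pairs of elements of a spanning set. *)

From mathcomp Require Import all_boot all_order all_algebra.
Set Implicit Arguments.
Unset Strict Implicit.
Unset Printing Implicit Defensive.
Import GRing.Theory.
Local Open Scope ring_scope.

Section BilinearOp.
Variables (K : fieldType) (A : lmodType K) (op : A -> A -> A).
Hypothesis op_bilinear : bilinear_op op.

Lemma bilinear_opDl x y z : op (x + y) z = op x z + op y z.
Proof. by case: op_bilinear => /(_ 1 x y z); rewrite !scale1r. Qed.

Lemma bilinear_opDr x y z : op x (y + z) = op x y + op x z.
Proof. by case: op_bilinear => _ /(_ 1 x y z); rewrite !scale1r. Qed.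

Lemma bilinear_op0l z : op 0 z = 0.
Proof. by apply: (addIr (op 0 z)); rewrite -bilinear_opDl !add0r. Qed.

Lemma bilinear_op0r x : op x 0 = 0.
Proof. by apply: (addIr (op x 0)); rewrite -bilinear_opDr !add0r. Qed.

Lemma bilinear_opZl (a : K) x z : op (a *: x) z = a *: op x z.
Proof. by case: op_bilinear => /(_ a x 0 z); rewrite addr0 bilinear_op0l addr0. Qed.

Lemma bilinear_opZr (a : K) x z : op x (a *: z) = a *: op x z.
Proof. by case: op_bilinear => _ /(_ a x z 0); rewrite addr0 bilinear_op0r addr0. Qed.

End BilinearOp.

Section Char2Lmodule.
Variables (K : fieldType) (A : lmodType K).
Hypothesis char2 : 2%N \in [pchar K].

Lemma addrr_lmod_pchar2 (x : A) : x + x = 0.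
Proof. by rewrite -mulr2n -scaler_nat (pcharf0 char2) scale0r. Qed.

Lemma subr_lmod_pchar2 (x y : A) : x - y = x + y.
Proof. by rewrite -[- y]add0r -(addrr_lmod_pchar2 y) addrK. Qed.

Lemma alternating_bilinear_opC (op : A -> A -> A) :
  bilinear_op op -> (forall x, op x x = 0) -> forall x y, op x y = op y x.
Proof.
move=> op_bilinear op_alt x y; apply/eqP; rewrite -subr_eq0 subr_lmod_pchar2.
rewrite -(op_alt (x + y)) (bilinear_opDl op_bilinear).
by rewrite !(bilinear_opDr op_bilinear) !op_alt add0r addr0.
Qed.

End Char2Lmodule.

Definition spanning_set (K : fieldType) (A : lmodType K) (B : A -> Prop) :=
  forall x : A, exists (s : seq A) (c : A -> K),
    (forall a, a \in s -> B a) /\ x = \sum_(a <- s) c a *: a.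

Section RestrictedDefect.
Variables (K : fieldType) (A : lmodType K) (mul br : A -> A -> A) (sq : A -> A).
Hypothesis char2 : 2%N \in [pchar K].
Hypothesis weakly_restricted : weakly_restricted_poisson mul br sq.

Let mul_bilinear : bilinear_op mul. Proof. by case: weakly_restricted => [[[]]]. Qed.
Let mulC x y : mul x y = mul y x. Proof. by case: weakly_restricted => [[[]]]. Qed.
Let mulA x y z : mul x (mul y z) = mul (mul x y) z.
Proof. by case: weakly_restricted => [[[]]]. Qed.
Let br_bilinear : bilinear_op br. Proof. by case: weakly_restricted => [[_ []]]. Qed.
Let br_alt x : br x x = 0. Proof. by case: weakly_restricted => [[_ []]]. Qed.
Let br_mull a b c : br (mul a b) c = mul a (br b c) + mul b (br a c).
Proof. by case: weakly_restricted => [[]]. Qed.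
Let sqZ (l : K) x : sq (l *: x) = l ^+ 2 *: sq x.
Proof. by case: weakly_restricted => _ []. Qed.
Let sqD x y : sq (x + y) = sq x + sq y + br x y.
Proof. by case: weakly_restricted => _ []. Qed.

Let mulDl := bilinear_opDl mul_bilinear.
Let mulDr := bilinear_opDr mul_bilinear.
Let mulZl := bilinear_opZl mul_bilinear.
Let mulZr := bilinear_opZr mul_bilinear.
Let brDl := bilinear_opDl br_bilinear.
Let brZl := bilinear_opZl br_bilinear.
Let brC := alternating_bilinear_opC char2 br_bilinear br_alt.

Definition restricted_defect x y :=
  sq (mul x y) - (mul (mul x x) (sq y) + mul (mul y y) (sq x) + mul (mul x y) (br x y)).

Lemma restricted_identityE x y :
  restricted_identity mul br sq x y <-> restricted_defect x y = 0.
Proof.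
rewrite /restricted_defect /restricted_identity.
by split=> [->|/eqP]; [rewrite subrr | rewrite subr_eq0 => /eqP].
Qed.

Lemma restricted_defectC x y : restricted_defect x y = restricted_defect y x.
Proof. by rewrite /restricted_defect mulC brC [mul (mul y y) _ + _]addrC. Qed.

Lemma br_mul_mul x x' y :
  br (mul x y) (mul x' y) =
  mul (mul x y) (br x' y) + mul (mul x' y) (br x y) + mul (mul y y) (br x x').
Proof.
rewrite br_mull (brC y) (brC x) !br_mull br_alt !mulDr !(bilinear_op0r mul_bilinear).
by rewrite add0r !mulA (mulC y x') (brC y x) (brC x' x) addrA.
Qed.

Lemma mul_selfD x x' : mul (x + x') (x + x') = mul x x + mul x' x'.
Proof.
rewrite mulDl !mulDr (mulC x') addrA -(addrA (mul x x)).
by rewrite (addrr_lmod_pchar2 char2) addr0.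
Qed.

Lemma restricted_defectDl x x' y :
  restricted_defect (x + x') y = restricted_defect x y + restricted_defect x' y.
Proof.
rewrite /restricted_defect !(subr_lmod_pchar2 char2).
rewrite mulDl sqD br_mul_mul mul_selfD sqD brDl !mulDl !mulDr !addrA.
(* The three cross terms of [br_mul_mul] occur again in the expansion of
   (x + x') y {x + x', y} and y^2 (x + x')^{[2]}, and cancel in characteristic 2. *)
rewrite [LHS](@GRing.add A).[ACl ((1*6*8*11*2*7*9*14)*((3*4*5)*(12*13*10)))].
by rewrite (addrr_lmod_pchar2 char2) addr0.
Qed.

Lemma restricted_defectZl (l : K) x y :
  restricted_defect (l *: x) y = l ^+ 2 *: restricted_defect x y.
Proof.
rewrite /restricted_defect !(mulZl, mulZr, sqZ, brZl).
by rewrite !scalerA -expr2 scalerBr !scalerDr.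
Qed.

Lemma restricted_defect0l y : restricted_defect 0 y = 0.
Proof. by rewrite -[0 in LHS](scale0r (0 : A)) restricted_defectZl expr0n scale0r. Qed.

Lemma restricted_defect_suml (s : seq A) (c : A -> K) y :
  restricted_defect (\sum_(a <- s) c a *: a) y =
  \sum_(a <- s) c a ^+ 2 *: restricted_defect a y.
Proof.
elim: s => [|a s IHs]; first by rewrite !big_nil restricted_defect0l.
by rewrite !big_cons restricted_defectDl restricted_defectZl IHs.
Qed.

Lemma restricted_defect_spanl (B : A -> Prop) y :
  spanning_set B -> (forall a, B a -> restricted_defect a y = 0) ->
  forall x, restricted_defect x y = 0.
Proof.
move=> spanB defectB x; have [s [c [sB ->]]] := spanB x.
rewrite restricted_defect_suml big1_seq // => a /andP[_ /sB/defectB ->].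
exact: scaler0.
Qed.

Lemma restricted_identity_span (B : A -> Prop) :
  spanning_set B ->
  (forall a b, B a -> B b -> restricted_identity mul br sq a b) ->
  forall x y, restricted_identity mul br sq x y.
Proof.
move=> spanB identityB x y; apply/restricted_identityE.
apply: (restricted_defect_spanl spanB) => a Ba; rewrite restricted_defectC.
apply: (restricted_defect_spanl spanB) => b Bb.
exact/restricted_identityE/identityB.
Qed.

End RestrictedDefect.

Theorem mainTheorem9 (K : fieldType) (A : lmodType K)
    (mul br : A -> A -> A) (sq : A -> A) (B : A -> Prop) :
  2%N \in [pchar K] ->
  weakly_restricted_poisson mul br sq ->
  is_linear_basis B ->
  (restricted_poisson mul br sq <->
   (forall x y, B x -> B y -> restricted_identity mul br sq x y)).
Proof.
move=> char2 weakly_restricted [spanB _].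
split=> [[_ restricted] x y _ _ | identityB]; first exact: restricted.
split=> //; exact: (restricted_identity_span char2 weakly_restricted spanB).
Qed.
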